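(* Let $0<p\le 1$ and let $\mathcal{X}=(\mathbf{x}_n)_{n=1}^\infty$ be a spreading basis of a locally $p$-convex quasi-Banach space $\mathbb{X}$. Then there is an equivalent $p$-norm for $\mathbb{X}$ relative to which $\mathcal{X}$ is isometrically spreading.
   Context: Scalars are real or complex. A quasi-Banach space is locally $p$-convex if the origin has a $p$-convex neighbourhood; equivalently it admits an equivalent $p$-norm, i.e. a quasi-norm $\|\cdot\|$ with $\|f+g\|^p\le\|f\|^p+\|g\|^p$. A complete minimal system is a sequence $\mathcal{X}=(\mathbf{x}_n)$ with dense linear span for which there exist $\mathbf{x}_n^*\in\mathbb{X}^*$ with $\mathbf{x}_n^*(\mathbf{x}_k)=\delta_{n,k}$ (coordinate functionals). For $\mathcal{N}\subseteq\mathbb{N}$ and an injective map $\psi\colon\mathcal{N}\to\mathbb{N}$, $\psi$ is a shift relative to $\mathcal{X}$ if the linear map $f\mapsto\sum_{n\in\mathcal{N}}\mathbf{x}_n^*(f)\,\mathbf{x}_{\psi(n)}$, $f\in\operatorname{span}(\mathcal{X})$, extends to a bounded operator $L_\psi\colon\mathbb{X}\to\mathbb{X}$. A spreading basis is a complete minimal system such that every increasing map $\psi\colon\mathbb{N}\to\mathbb{N}$ is a shift and $L_\psi$ is an isomorphism (onto its range). For a sequence $(\mathbf{x}_n)$, $\mathcal{N}\subseteq\mathbb{N}$ and an injective $\psi\colon\mathcal{N}\to\mathbb{N}$, $\psi$ is a translation if the assignment $\mathbf{x}_n\mapsto\mathbf{x}_{\psi(n)}$, $n\in\mathcal{N}$,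 defines a linear map on $\operatorname{span}(\mathbf{x}_n\colon n\in\mathcal{N})$ extending to an isomorphism $T_\psi$ from the closed linear span of $\{\mathbf{x}_n\colon n\in\mathcal{N}\}$ onto the closed linear span of $\{\mathbf{x}_n\colon n\in\psi(\mathcal{N})\}$. A sequence is isometrically spreading if every increasing map $\psi\colon\mathcal{N}\to\mathbb{N}$ with $\mathcal{N}\subseteq\mathbb{N}$ infinite is a translation with $\|T_\psi\|\le 1$. *)

From HB Require Import structures.
From mathcomp Require Import all_boot all_order all_algebra.
From mathcomp Require Import all_classical all_reals all_analysis.
From mathcomp Require Import complex.
Set Implicit Arguments. Unset Strict Implicit. Unset Printing Implicit Defensive.
Import Order.TTheory GRing.Theory Num.Theory.
Local Open Scope ring_scope.
Local Open Scope classical_set_scope.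

(* Scalars: a field K (instantiated with R or R[i]) with an absolute value
   absK : K -> R; the space X is a K-vector space; (quasi-)norms are R-valued. *)
Section QuasiBanach.
Variables (R : realType) (K : numFieldType) (absK : K -> R) (X : lmodType K).
Implicit Types (N : X -> R) (x : nat -> X).

Definition quasinorm N : Prop :=
  [/\ forall f, 0 <= N f,
      forall f, N f = 0 -> f = 0,
      forall (a : K) f, N (a *: f) = absK a * N f &
      exists2 kappa : R, 1 <= kappa &
        forall f g, N (f + g) <= kappa * (N f + N g)].

Definition complete_wrt N : Prop :=
  forall u : nat -> X,
    (forall e : R, 0 < e -> exists n0, forall m n,
        (n0 <= m)%N -> (n0 <= n)%N -> N (u m - u n) < e) ->
    exists l : X, forall e : R, 0 < e -> exists n0, forall n,
        (n0 <= n)%N -> N (u n - l) < e.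

Definition quasi_banach N : Prop := quasinorm N /\ complete_wrt N.

Definition equiv_qn N N' : Prop :=
  exists c C : R, [/\ 0 < c, 0 < C & forall f, c * N f <= N' f <= C * N f].

Definition pnorm (p : R) N : Prop :=
  quasinorm N /\ forall f g, N (f + g) `^ p <= N f `^ p + N g `^ p.

Definition locally_pconvex (p : R) N : Prop :=
  exists N', pnorm p N' /\ equiv_qn N N'.

Definition lin_comb x (s : seq nat) (a : nat -> K) : X :=
  \sum_(n <- s) a n *: x n.

Definition in_span x (S : set nat) (f : X) : Prop :=
  exists (s : seq nat) (a : nat -> K),
    (forall n, n \in s -> S n) /\ f = lin_comb x s a.

Definition in_closed_span N x (S : set nat) (f : X) : Prop :=
  forall e : R, 0 < e -> exists g, in_span x S g /\ N (f - g) < e.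

Definition linear_map (L : X -> X) : Prop :=
  forall (a : K) f g, L (a *: f + g) = a *: L f + L g.

Definition bounded_operator N (L : X -> X) : Prop :=
  linear_map L /\ exists C : R, forall f, N (L f) <= C * N f.

Definition complete_minimal_system N x (xs : nat -> X -> K) : Prop :=
  [/\ forall f, in_closed_span N x setT f,
      forall n, (forall (a : K) f g, xs n (a *: f + g) = a * xs n f + xs n g)
                /\ (exists C : R, forall f, absK (xs n f) <= C * N f) &
      forall n k, xs n (x k) = (n == k)%:R].

Definition is_shift_op N x (xs : nat -> X -> K) (psi : nat -> nat)
    (L : X -> X) : Prop :=
  bounded_operator N L /\
  forall (s : seq nat) (a : nat -> K), uniq s ->
    L (lin_comb x s a) = \sum_(n <- s) xs n (lin_comb x s a) *: x (psi n).

Definition spreading_basis N x : Prop :=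
  exists xs : nat -> X -> K, complete_minimal_system N x xs /\
    forall psi : nat -> nat, (forall m n, (m < n)%N -> (psi m < psi n)%N) ->
      exists L : X -> X, is_shift_op N x xs psi L /\
        exists2 c : R, 0 < c & forall f, c * N f <= N (L f).

Definition translation_norm_le1 N x (M : set nat) (psi : nat -> nat) : Prop :=
  exists T : X -> X,
    [/\ forall (a : K) f g, in_closed_span N x M f -> in_closed_span N x M g ->
          T (a *: f + g) = a *: T f + T g,
        forall (s : seq nat) (a : nat -> K), (forall n, n \in s -> M n) ->
          T (lin_comb x s a) = lin_comb (x \o psi) s a,
        (forall f, in_closed_span N x M f -> in_closed_span N x (psi @` M) (T f)) /\
        (forall g, in_closed_span N x (psi @` M) g ->
          exists2 f, in_closed_span N x M f & T f = g),
        (exists2 c : R, 0 < c & forall f, in_closed_span N x M f -> c * N f <= N (T f)) &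
        forall f, in_closed_span N x M f -> N (T f) <= N f].

Definition isometrically_spreading N x : Prop :=
  forall (M : set nat) (psi : nat -> nat), infinite_set M ->
    (forall m n, M m -> M n -> (m < n)%N -> (psi m < psi n)%N) ->
    translation_norm_le1 N x M psi.

End QuasiBanach.

From mathcomp Require Import all_boot all_order all_algebra.
From mathcomp Require Import all_classical all_reals all_analysis.
From mathcomp Require Import complex.
From mathcomp Require Import lra.
Set Implicit Arguments. Unset Strict Implicit. Unset Printing Implicit Defensive.
Import Order.TTheory GRing.Theory Num.Theory.

(* Pass from the p-norm P to the subadditive functional q = P^p.  The shift
   operators L_psi (psi increasing) satisfy L_rho L_tau = L_(rho o tau), and a
   gliding-hump argument on finitely supported vectors, through the identity
   L_(+s) L_psi = L_(splice) L_(+r), shows that they are uniformly bounded above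
   and below.  Hence sup_rho q (L_rho h) is an equivalent subadditive functional
   that shifts do not increase, and its infimum over tau of the values at L_tau h
   is still subadditive (two increasing maps have a common refinement
   a o tau1 = b o tau2) and invariant under every L_sigma.  Its p-th root is the
   required p-norm; the translation along an infinite M is L_(psi o s) composed
   with the inverse of L_s, where s enumerates M. *)

Notation increasing f := {homo f : m n / (m < n)%N}.

Section IncreasingMaps.
Implicit Types (psi s t u : nat -> nat).

Lemma increasing_ge_id psi n : increasing psi -> n <= psi n.
Proof. by move=> psi_inc; elim: n => // n IHn; exact: leq_ltn_trans IHn (psi_inc _ _ _). Qed.

Lemma increasing_id : increasing id.
Proof. by []. Qed.

Lemma increasing_comp s t : increasing s -> increasing t -> increasing (s \o t).
Proof. by move=> s_inc t_inc m n /t_inc /s_inc. Qed.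

Lemma increasing_addr r : increasing (addn^~ r).
Proof. by move=> m n; rewrite ltn_add2r. Qed.

Definition count_below s m := count (fun k => s k < m) (iota 0 m).

Lemma count_below_val s n : increasing s -> count_below s (s n) = n.
Proof.
move=> s_inc; rewrite /count_below (eq_count (a2 := fun k => k < n)); last first.
  by move=> k; rewrite (leqW_mono (leq_mono s_inc)).
have /subnKC <- := increasing_ge_id n s_inc.
rewrite iotaD count_cat add0n (eq_in_count (a2 := predT)); last first.
  by move=> k; rewrite mem_iota => /andP[].
rewrite count_predT size_iota (eq_in_count (a2 := pred0)) ?count_pred0 ?addn0 //.
by move=> k; rewrite mem_iota => /andP[nk _]; rewrite /= ltnNge nk.
Qed.

Lemma count_below_mono s : {homo count_below s : m n / m <= n}.
Proof.
move=> m n /subnKC <-; rewrite /count_below iotaD count_cat.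
apply: leq_trans (leq_addr _ _) ; apply: sub_count => k /= /leq_trans; apply.
exact: leq_addr.
Qed.

(* The value s n has exactly n predecessors in the range of s, so both
   composites below send n to s n + t n. *)
Lemma common_refinement s t : increasing s -> increasing t ->
  exists a b, [/\ increasing a, increasing b & a \o s =1 b \o t].
Proof.
move=> s_inc t_inc.
have refine_inc s' t' : increasing t' -> increasing (fun m => m + t' (count_below s' m)).
  move=> t'_inc m n lt_mn; rewrite -addSn leq_add //.
  exact/(ltnW_homo t'_inc)/count_below_mono/ltnW.
exists (fun m => m + t (count_below s m)), (fun m => m + s (count_below t m)).
by split; [exact: refine_inc | exact: refine_inc | move=> n /=; rewrite !count_below_val // addnC].
Qed.

Definition splice r u psi n := if n < r then u n else u r + psi (n - r).

Lemma splice_increasing r u psi : increasing u -> increasing psi ->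
  increasing (splice r u psi).
Proof.
move=> u_inc psi_inc m n lt_mn; rewrite /splice.
case: (ltnP n r) => [ltnr|lern]; first by rewrite (ltn_trans lt_mn ltnr) u_inc.
case: (ltnP m r) => [ltmr|lerm]; first exact: leq_trans (u_inc _ _ ltmr) (leq_addr _ _).
by rewrite ltn_add2l psi_inc // ltn_sub2r // (leq_ltn_trans lerm).
Qed.

Lemma splice_lt r u psi n : n < r -> splice r u psi n = u n.
Proof. by rewrite /splice => ->. Qed.

Lemma splice_addr r u psi n : splice r u psi (n + r) = psi n + u r.
Proof. by rewrite /splice ltnNge leq_addl /= addnK addnC. Qed.

Lemma infinite_set_enum (M : set nat) : infinite_set M ->
  exists s, [/\ increasing s, forall n, M (s n) & (M `<=` range s)%classic].
Proof.
move=> Minf.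
have M_unbounded k : exists m, `[< M m >] && (k <= m).
  apply: contrapT => none; apply: Minf; apply: (sub_finite_set _ (finite_II k)).
  move=> m Mm /=; rewrite ltnNge; apply/negP => km; apply: none.
  by exists m; rewrite km andbT; apply/asboolP.
pose next k := ex_minn (M_unbounded k).
have nextP k : [/\ M (next k), k <= next k & forall m, M m -> k <= m -> next k <= m].
  rewrite /next; case: ex_minnP => m /andP[/asboolP Mm km] min_m; split => // m' Mm' km'.
  by apply: min_m; rewrite km' andbT; apply/asboolP.
pose fix s n := if n is n'.+1 then next (s n').+1 else next 0.
have s_inc : increasing s.
  by apply: (@homo_ltn _ _ (fun a b => a < b)) ltn_trans _ => n; case: (nextP (s n).+1).
exists s; split=> // [[|n]|m Mm]; [by case: (nextP 0) | by case: (nextP (s n).+1) |].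
suff [n <-] : exists n, s n = m by exists n.
have beyond_m : exists n, m < s n by exists m.+1; exact: increasing_ge_id.
case: (ex_minnP beyond_m) => -[|n] lt_m_sn min_n.
  by case: (nextP 0) lt_m_sn => _ _ /(_ m Mm isT); rewrite leqNgt => /negbTE ->.
have le_sn_m : s n <= m by rewrite leqNgt; apply/negP => /min_n; rewrite ltnn.
exists n; apply/eqP; rewrite eqn_leq le_sn_m /= leqNgt; apply/negP => lt_sn_m.
by case: (nextP (s n).+1) lt_m_sn => _ _ /(_ m Mm lt_sn_m); rewrite leqNgt => /negbTE ->.
Qed.

Lemma increasing_glue (u : nat -> nat -> nat) (r : nat -> nat) :
  (forall j, increasing (u j)) -> (forall j, j <= r j) -> (forall j, r j <= r j.+1) ->
  (forall j n, n < r j -> u j.+1 n = u j n) ->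
  exists psi, increasing psi /\ forall j n, n < r j -> psi n = u j n.
Proof.
move=> u_inc r_ge r_mono u_stable.
have r_homo : {homo r : j k / j <= k}.
  exact: (@homo_leq _ _ (fun a b => a <= b)) leqnn leq_trans _.
have u_stable' j k n : j <= k -> n < r j -> u k n = u j n.
  move=> /subnKC <-; elim: (k - j) => [|d IHd] lt_n_rj; first by rewrite addn0.
  by rewrite addnS u_stable ?IHd // (leq_trans lt_n_rj) ?r_homo ?leq_addr.
exists (fun n => u n.+1 n); split=> [m n lt_mn | j n lt_n_rj].
  by rewrite -(u_stable' m.+1 n.+1 m) ?u_inc ?ltnS // ltnW.
by rewrite -(u_stable' _ (maxn j n.+1)) ?leq_maxr // (u_stable' j) ?leq_maxl.
Qed.

End IncreasingMaps.

Section Diagonal.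
Variables (T : Type) (t0 : T) (support : T -> seq nat).
Variable fails : (nat -> nat) -> T -> nat -> Prop.
Hypothesis fails_local : forall psi psi' t j, {in support t, psi =1 psi'} ->
  fails psi t j -> fails psi' t j.
Hypothesis fails_bounded : forall psi, increasing psi -> exists j, forall t, ~ fails psi t j.

(* Otherwise one could modify increasing maps step by step, beyond the support of
   earlier witnesses, into a limit map failing at every level j. *)
Lemma diagonal_uniformity : exists r u j, increasing u /\
  forall psi, increasing psi -> {in gtn r, psi =1 u} -> forall t, ~ fails psi t j.
Proof.
apply: contrapT => none.
have extend (ruj : nat * (nat -> nat) * nat) : exists w : (nat -> nat) * T,
    increasing ruj.1.2 -> [/\ increasing w.1, {in gtn ruj.1.1, w.1 =1 ruj.1.2}
                           & fails w.1 w.2 ruj.2].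
  case: ruj => [[r u] j] /=; have [u_inc|] := pselect (increasing u); last by exists (u, t0).
  apply: contrapT => no_ext; apply: none; exists r, u, j; split=> // psi psi_inc psi_u t fails_t.
  by apply: no_ext; exists (psi, t).
have [F FP] := choice extend.
pose fix st j := if j is j'.+1 then
  let w := F ((st j').1, (st j').2, j') in
  ((maxn (st j').1 (\max_(n <- support w.2) n)).+1, w.1) else (0, id).
pose w j := F ((st j).1, (st j).2, j).
have st_inc j : increasing (st j).2 /\ j <= (st j).1.
  elim: j => [|j [stj_inc le_j]]; first by split=> // m n.
  have [w_inc _ _] := FP ((st j).1, (st j).2, j) stj_inc.
  by split=> //=; rewrite ltnS (leq_trans le_j) ?leq_maxl.
have st_step j : [/\ (st j.+1).2 = (w j).1, {in gtn (st j).1, (w j).1 =1 (st j).2}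
                   & fails (w j).1 (w j).2 j].
  by have [_ ? ?] := FP ((st j).1, (st j).2, j) (st_inc j).1.
have r_mono j : (st j).1 <= (st j.+1).1 by rewrite /= ltnW // ltnS leq_maxl.
have u_stable j n : n < (st j).1 -> (st j.+1).2 n = (st j).2 n.
  by case: (st_step j) => -> + _ => /[apply].
have [psi [psi_inc psi_st]] := increasing_glue (fun j => (st_inc j).1)
  (fun j => (st_inc j).2) r_mono u_stable.
have [j0 j0_ok] := fails_bounded psi_inc.
have [_ _ fails_w] := st_step j0; apply: (j0_ok (w j0).2).
apply: fails_local fails_w => n n_supp; rewrite (psi_st j0.+1) ?(proj1 (st_step j0)) //=.
by rewrite ltnS leq_max (@leq_bigmax_seq _ _ xpredT id) ?orbT.
Qed.
End Diagonal.

Local Open Scope ring_scope.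
Local Open Scope classical_set_scope.

Section LinearCombinations.
Variables (K : numFieldType) (X : lmodType K).
Implicit Types (y : nat -> X) (t : seq (nat * K)) (A : X -> X).

(* Indices may repeat in t, so that relabelling them by a non-injective map
   stays within this form. *)
Definition lcomb y t : X := \sum_(u <- t) u.2 *: y u.1.

Definition relabel (g : nat -> nat) t := [seq (g u.1, u.2) | u <- t].

Lemma lcomb_comp y g t : lcomb (y \o g) t = lcomb y (relabel g t).
Proof. by rewrite /lcomb big_map. Qed.

Lemma lin_combE y s a : lin_comb y s a = lcomb y [seq (n, a n) | n <- s].
Proof. by rewrite /lcomb big_map. Qed.

Lemma eq_lcomb y y' t : {in t, forall u, y u.1 = y' u.1} -> lcomb y t = lcomb y' t.
Proof. by move=> eq_y; apply: eq_big_seq => u /eq_y ->. Qed.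

Lemma lcomb_lin_comb y t :
  lcomb y t = lin_comb y (undup (map fst t)) (fun n => \sum_(u <- t | u.1 == n) u.2).
Proof.
rewrite /lin_comb; under eq_bigr => n _ do rewrite scaler_suml big_mkcond /=.
rewrite exchange_big /=; apply: eq_big_seq => u ut; rewrite -big_mkcond /=.
rewrite -big_filter (@eq_filter _ _ (pred1 u.1)) => [|n /=]; last exact: eq_sym.
by rewrite filter_pred1_uniq ?undup_uniq ?mem_undup ?map_f // big_seq1.
Qed.

Lemma linear_mapD A : linear_map A -> {morph A : f g / f + g}.
Proof. by move=> linA f g; have := linA 1 f g; rewrite !scale1r. Qed.

Lemma linear_map0 A : linear_map A -> A 0 = 0.
Proof.
move=> linA; have := linear_mapD linA 0 0; rewrite addr0 => A0.
by apply: (addrI (A 0)); rewrite addr0 -A0.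
Qed.

Lemma linear_mapZ A : linear_map A -> forall a f, A (a *: f) = a *: A f.
Proof. by move=> linA a f; rewrite -[a *: f]addr0 linA linear_map0 // addr0. Qed.

Lemma linear_mapB A : linear_map A -> {morph A : f g / f - g}.
Proof. by move=> linA f g; rewrite addrC -scaleN1r linA scaleN1r addrC. Qed.

Lemma linear_map_comp A B : linear_map A -> linear_map B -> linear_map (A \o B).
Proof. by move=> linA linB a f g /=; rewrite linB linA. Qed.

Lemma linear_map_lcomb A y t : linear_map A -> A (lcomb y t) = lcomb (A \o y) t.
Proof.
move=> linA; elim: t => [|u t IHt]; first by rewrite /lcomb !big_nil linear_map0.
by rewrite /lcomb !big_cons linA IHt.
Qed.

End LinearCombinations.

Section Domination.
Variables (R : realType) (K : numFieldType) (X : lmodType K).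
Implicit Types (F G H : X -> R).

Lemma ler_powR2r (r a b : R) : 0 <= r -> 0 <= a -> 0 <= b -> a <= b -> a `^ r <= b `^ r.
Proof. by move=> r0 a0 b0; apply: ge0_ler_powR; rewrite ?nnegrE. Qed.

Lemma powRK (r y : R) : r != 0 -> 0 <= y -> (y `^ r) `^ r^-1 = y.
Proof. by move=> r0 y0; rewrite -powRrM mulfV // powRr1. Qed.

Lemma powRVK (r y : R) : r != 0 -> 0 <= y -> (y `^ r^-1) `^ r = y.
Proof. by move=> r0 y0; rewrite -powRrM mulVf // powRr1. Qed.

Definition dominated0 F G := forall e : R, 0 < e ->
  exists2 d : R, 0 < d & forall h, G h < d -> F h < e.

Lemma dominated0_trans F G H : dominated0 F G -> dominated0 G H -> dominated0 F H.
Proof.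
move=> FG GH e e0; have [d d0 dP] := FG e e0; have [d' d'0 d'P] := GH d d0.
by exists d' => // h /d'P /dP.
Qed.

Lemma dominated0_le F G k : 0 < k -> (forall h, F h <= k * G h) -> dominated0 F G.
Proof.
move=> k0 FG e e0; exists (e / k) => [|h]; first exact: divr_gt0.
by rewrite ltr_pdivlMr // mulrC => /(le_lt_trans (FG h)).
Qed.

Lemma dominated0_powR F (r : R) : 0 < r -> (forall h, 0 <= F h) ->
  dominated0 (fun h => F h `^ r) F.
Proof.
move=> r0 F0 e e0; exists (e `^ r^-1) => [|h]; first exact: powR_gt0.
move=> lt_h; rewrite -(powRVK (lt0r_neq0 r0) (ltW e0)).
by apply: gt0_ltr_powR; rewrite ?nnegrE ?powR_ge0.
Qed.

Lemma dominated0_powRV F (r : R) : 0 < r -> (forall h, 0 <= F h) ->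
  dominated0 F (fun h => F h `^ r).
Proof.
move=> r0 F0 e e0; exists (e `^ r) => [|h]; first exact: powR_gt0.
by apply: contraTT; rewrite -!leNgt; apply: ler_powR2r; rewrite ?(ltW r0) ?(ltW e0).
Qed.

Lemma equiv_qn_dominated0 F G : equiv_qn F G -> dominated0 F G /\ dominated0 G F.
Proof.
move=> [c [C [c0 C0 FG]]]; split.
  apply: (dominated0_le (k := c^-1)); rewrite ?invr_gt0 // => h.
  by rewrite ler_pdivlMl //; case/andP: (FG h).
by apply: (dominated0_le C0) => h; case/andP: (FG h).
Qed.

Lemma in_closed_span_dominated0 F G (x : nat -> X) S f : dominated0 F G ->
  in_closed_span G x S f -> in_closed_span F x S f.
Proof.
move=> FG f_in e e0; have [d d0 dP] := FG e e0.
by have [g [g_span /dP]] := f_in d d0; exists g.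
Qed.

Lemma in_closed_span_dominated0E F G (x : nat -> X) S : dominated0 F G -> dominated0 G F ->
  in_closed_span F x S = in_closed_span G x S.
Proof.
move=> FG GF; apply/funext => f; apply/propext.
by split; apply: in_closed_span_dominated0.
Qed.

Lemma in_closed_span_equiv F G (x : nat -> X) S :
  equiv_qn F G -> in_closed_span F x S = in_closed_span G x S.
Proof. by move=> /equiv_qn_dominated0[FG GF]; exact: in_closed_span_dominated0E. Qed.

Lemma complete_wrt_dominated0 F G : dominated0 F G -> dominated0 G F ->
  complete_wrt G -> complete_wrt F.
Proof.
move=> FG GF G_compl u u_cauchy.
have [l u_to_l] : exists l, forall e, 0 < e -> exists n0, forall n, (n0 <= n)%N -> G (u n - l) < e.
  apply: G_compl => e e0; have [d d0 dP] := GF e e0.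
  by have [n0 n0P] := u_cauchy d d0; exists n0 => m n m0 n0m; apply/dP/n0P.
exists l => e e0; have [d d0 dP] := FG e e0.
by have [n0 n0P] := u_to_l d d0; exists n0 => n n0n; apply/dP/n0P.
Qed.

End Domination.

Section SubadditiveFunctional.
Variables (R : realType) (K : numFieldType) (X : lmodType K).
Variable q : X -> R.
Hypothesis q_ge0 : forall f, 0 <= q f.
Hypothesis q_eq0 : forall f, q f = 0 -> f = 0.
Hypothesis q0 : q 0 = 0.
Hypothesis qN : forall f, q (- f) = q f.
Hypothesis qD : forall f g, q (f + g) <= q f + q g.
Variable x : nat -> X.
Hypothesis x_dense : forall f, in_closed_span q x setT f.
Hypothesis q_complete : complete_wrt q.
Implicit Types (f g h : X) (A B : X -> X) (t : seq (nat * K)).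

Lemma in_closed_spanP S f : in_closed_span q x S f <->
  forall e, 0 < e -> exists t, {in t, forall u, S u.1} /\ q (f - lcomb x t) < e.
Proof.
split=> f_in e /f_in.
  move=> [_ [[s [a [sS ->]]] lt_e]]; exists [seq (n, a n) | n <- s].
  by rewrite -lin_combE; split=> // _ /mapP[n ns ->]; exact: sS.
move=> [t [tS lt_e]]; exists (lcomb x t); split=> //.
rewrite lcomb_lin_comb; do 3!eexists; last reflexivity.
by move=> n; rewrite mem_undup => /mapP[u /tS Su ->].
Qed.

Lemma lcomb_dense f e : 0 < e -> exists t, q (f - lcomb x t) < e.
Proof. by move=> /((in_closed_spanP _ _).1 (x_dense f)) [t [_ lt_e]]; exists t. Qed.

Lemma qBC f g : q (f - g) = q (g - f).
Proof. by rewrite -qN opprB. Qed.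

Lemma qB_tri f g h : q (f - h) <= q (f - g) + q (g - h).
Proof. by rewrite -[f - h](subrKA g); exact: qD. Qed.

Lemma eq_approx f g : (forall e, 0 < e -> q (f - g) <= e) -> f = g.
Proof.
move=> small; apply/eqP; rewrite -subr_eq0; apply/eqP/q_eq0/le_anti.
by rewrite q_ge0 andbT; apply/ler_addgt0Pr => e /small; rewrite add0r.
Qed.

Definition bounded_wrt A := exists2 C : R, 0 < C & forall f, q (A f) <= C * q f.

Definition bounded_below_wrt A := exists2 c : R, 0 < c & forall f, c * q f <= q (A f).

Lemma bounded_wrt_comp A B : bounded_wrt A -> bounded_wrt B -> bounded_wrt (A \o B).
Proof.
move=> [C C0 AC] [D D0 BD]; exists (C * D) => [|f /=]; first exact: mulr_gt0.
by rewrite -mulrA; apply: le_trans (AC _) _; rewrite ler_pM2l.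
Qed.

Lemma bounded_linear_eq A B : linear_map A -> linear_map B ->
  bounded_wrt A -> bounded_wrt B -> (forall t, A (lcomb x t) = B (lcomb x t)) -> A =1 B.
Proof.
move=> linA linB [C C0 AC] [D D0 BD] eqAB f; apply: eq_approx => e e0.
have CD0 : 0 < C + D by rewrite addr_gt0.
have [t ft] := lcomb_dense f (divr_gt0 e0 CD0).
have -> : A f - B f = A (f - lcomb x t) - B (f - lcomb x t).
  by rewrite linear_mapB // linear_mapB // eqAB opprB addrA subrK.
apply: le_trans (qD _ _) _; rewrite qN.
apply: le_trans (lerD (AC _) (BD _)) _; rewrite -mulrDl mulrC -ler_pdivlMr //.
exact: ltW.
Qed.

Lemma bounded_from_span A C : linear_map A -> bounded_wrt A -> 0 <= C ->
  (forall t, q (A (lcomb x t)) <= C * q (lcomb x t)) -> forall f, q (A f) <= C * q f.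
Proof.
move=> linA [C1 C10 AC1] C0 spanC f; apply/ler_addgt0Pr => e e0.
have D0 : 0 < C + C1 + 1 by lra.
have [t] := lcomb_dense f (divr_gt0 e0 D0); set g := lcomb x t.
rewrite ltr_pdivlMr // => fg_small.
have qg : q g <= q f + q (f - g) by have := qD f (g - f); rewrite subrKC qBC.
have -> : A f = A g + A (f - g) by rewrite linear_mapB // addrC subrK.
apply: le_trans (qD _ _) _; apply: le_trans (lerD (spanC t) (AC1 _)) _.
have := ler_wpM2l C0 qg; have := q_ge0 (f - g); nra.
Qed.

Lemma bounded_below_from_span A c : linear_map A -> bounded_wrt A -> 0 < c ->
  (forall t, c * q (lcomb x t) <= q (A (lcomb x t))) -> forall f, c * q f <= q (A f).
Proof.
move=> linA [C1 C10 AC1] c0 spanc f; apply/ler_addgt0Pr => e e0.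
have D0 : 0 < C1 + c by rewrite addr_gt0.
have [t] := lcomb_dense f (divr_gt0 e0 D0); set g := lcomb x t.
rewrite ltr_pdivlMr // => fg_small.
have qf : q f <= q g + q (f - g) by have := qD g (f - g); rewrite subrKC.
have qAg : q (A g) <= q (A f) + q (A (f - g)).
  by have := qD (A f) (A g - A f); rewrite subrKC (qBC (A g)) -linear_mapB.
have := AC1 (f - g); have := ler_wpM2l (ltW c0) qf; have := spanc t.
have := q_ge0 (f - g); nra.
Qed.

Lemma closed_range A f : linear_map A -> bounded_wrt A -> bounded_below_wrt A ->
  (forall e, 0 < e -> exists h, q (f - A h) < e) -> exists h, A h = f.
Proof.
move=> linA [C C0 AC] [c c0 Ac] f_approx.
have /choice[h hP] : forall j, exists h, q (f - A h) < j.+1%:R^-1.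
  by move=> j; apply: f_approx; rewrite invr_gt0.
have h_cauchy e : 0 < e ->
    exists n0, forall m n, (n0 <= m)%N -> (n0 <= n)%N -> q (h m - h n) < e.
  move=> e0; have ce0 : 0 < c * e / 2 by rewrite divr_gt0 ?mulr_gt0.
  have [n0 _ n0P] := near_infty_natSinv_lt (PosNum ce0).
  exists n0 => m n m0 n0n; rewrite -(ltr_pM2l c0); apply: le_lt_trans (Ac _) _.
  rewrite linear_mapB // (splitr (c * e)); apply: le_lt_trans (qB_tri _ f _) _.
  by rewrite qBC ltrD // (lt_trans (hP _)) //; [exact: n0P m0 | exact: n0P n0n].
have [l lP] := q_complete h_cauchy; exists l; apply: eq_approx => e e0.
have eC0 : 0 < e / 2 / C by rewrite !divr_gt0.
have [n0 n0P] := lP _ eC0.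
have [n1 _ n1P] := near_infty_natSinv_lt (PosNum (divr_gt0 e0 (ltr0Sn R 1))).
pose n := maxn n0 n1; rewrite (splitr e); apply: le_trans (qB_tri _ (A (h n)) _) _.
rewrite -linear_mapB // (qBC (A (h n))); apply: lerD.
  apply: le_trans (AC _) _; rewrite qBC mulrC -ler_pdivlMr //.
  exact/ltW/n0P/leq_maxl.
by apply/ltW/(lt_trans (hP n))/n1P/leq_maxr.
Qed.

Section ShiftOperators.
Variable L : (nat -> nat) -> X -> X.
Hypothesis L_linear : forall psi, increasing psi -> linear_map (L psi).
Hypothesis L_x : forall psi, increasing psi -> forall n, L psi (x n) = x (psi n).
Hypothesis L_bounded : forall psi, increasing psi -> bounded_wrt (L psi).
Hypothesis L_bounded_below : forall psi, increasing psi -> bounded_below_wrt (L psi).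
Implicit Types (psi rho sigma tau : nat -> nat).

Lemma L_lcomb psi t : increasing psi -> L psi (lcomb x t) = lcomb (x \o psi) t.
Proof.
move=> psi_inc; rewrite linear_map_lcomb; last exact: L_linear.
by apply: eq_lcomb => u _ /=; rewrite L_x.
Qed.

Lemma L_comp rho tau : increasing rho -> increasing tau ->
  forall f, L rho (L tau f) = L (rho \o tau) f.
Proof.
move=> rho_inc tau_inc; have rt_inc := increasing_comp rho_inc tau_inc.
apply: (@bounded_linear_eq (L rho \o L tau)).
- exact: linear_map_comp (L_linear _) (L_linear _).
- exact: L_linear.
- exact: bounded_wrt_comp (L_bounded _) (L_bounded _).
- exact: L_bounded.
- by move=> t /=; rewrite !L_lcomb // lcomb_comp L_lcomb // -lcomb_comp.
Qed.

Lemma L_id : L id =1 id.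
Proof.
apply: bounded_linear_eq.
- exact: L_linear.
- by [].
- exact: L_bounded.
- by exists 1 => // f; rewrite mul1r.
- by move=> t; rewrite L_lcomb.
Qed.

Lemma L_inj psi : increasing psi -> injective (L psi).
Proof.
move=> psi_inc f g eq_fg; have [c c0 cP] := L_bounded_below psi_inc.
apply: eq_approx => e e0; have := cP (f - g).
rewrite (linear_mapB (L_linear psi_inc)) eq_fg subrr q0 pmulr_rle0 // => /le_trans; apply.
exact: ltW.
Qed.

Lemma L_in_closed_span rho (S : set nat) h : increasing rho -> (forall m, S (rho m)) ->
  in_closed_span q x S (L rho h).
Proof.
move=> rho_inc S_rho; apply/in_closed_spanP => e e0; have [C C0 CP] := L_bounded rho_inc.
have [t ht] := lcomb_dense h (divr_gt0 e0 C0); exists (relabel rho t); split.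
  by move=> _ /mapP[u _ ->]; exact: S_rho.
rewrite -lcomb_comp -L_lcomb // -(linear_mapB (L_linear rho_inc)); apply: le_lt_trans (CP _) _.
by rewrite mulrC -ltr_pdivlMr.
Qed.

Lemma closed_span_in_range sigma (S : set nat) f : increasing sigma ->
  S `<=` range sigma -> in_closed_span q x S f -> exists h, L sigma h = f.
Proof.
move=> sigma_inc S_range f_in.
have /choice[sinv sinvP] : forall n, exists m, S n -> sigma m = n.
  move=> n; have [/S_range[m _ <-]|nS] := pselect (S n); first by exists m.
  by exists 0%N.
apply: closed_range; [exact: L_linear | exact: L_bounded | exact: L_bounded_below |].
move=> e /((in_closed_spanP _ _).1 f_in) [t [tS ft]]; exists (lcomb x (relabel sinv t)).
rewrite L_lcomb // -lcomb_comp (@eq_lcomb _ _ _ x) // => u /tS Su /=.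
by rewrite sinvP.
Qed.

(* Apply diagonal_uniformity to the failure of [good]; on the span,
   L_(+ u r) L_psi = L_(splice r u psi) L_(+ r). *)
Lemma shift_uniformity (good : nat -> R -> R -> Prop) :
  (forall psi, increasing psi -> exists j, forall t,
     good j (q (lcomb x t)) (q (L psi (lcomb x t)))) ->
  exists r s j, forall psi, increasing psi -> forall t,
    good j (q (L (addn^~ r) (lcomb x t))) (q (L (addn^~ s) (L psi (lcomb x t)))).
Proof.
move=> good_shifts.
pose fails psi t j := ~ good j (q (lcomb x t)) (q (lcomb (x \o psi) t)).
have fails_local psi psi' t j : {in map fst t, psi =1 psi'} -> fails psi t j -> fails psi' t j.
  move=> eq_psi; rewrite /fails (@eq_lcomb _ _ (x \o psi) (x \o psi')) // => u ut /=.
  by rewrite eq_psi // map_f.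
have fails_bounded psi : increasing psi -> exists j, forall t, ~ fails psi t j.
  move=> psi_inc; have [j jP] := good_shifts psi psi_inc.
  by exists j => t; rewrite /fails -L_lcomb //; apply.
have [r [u [j [u_inc uP]]]] :=
  @diagonal_uniformity _ [::] (map fst) fails fails_local fails_bounded.
exists r, (u r), j => psi psi_inc t.
have spl_u : {in gtn r, splice r u psi =1 u} by move=> n; exact: splice_lt.
have Lr : L (addn^~ r) (lcomb x t) = lcomb x (relabel (addn^~ r) t).
  by rewrite L_lcomb; [exact: lcomb_comp | exact: increasing_addr].
have Ls : L (addn^~ (u r)) (L psi (lcomb x t)) =
          lcomb (x \o splice r u psi) (relabel (addn^~ r) t).
  rewrite L_lcomb // (lcomb_comp x psi) L_lcomb; last exact: increasing_addr.
  rewrite -(lcomb_comp (x \o addn^~ (u r))) -(lcomb_comp (x \o splice r u psi)).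
  by apply: eq_lcomb => v _ /=; rewrite splice_addr.
rewrite Lr Ls; apply: contrapT.
exact: uP _ (splice_increasing r u_inc psi_inc) spl_u (relabel (addn^~ r) t).
Qed.

Lemma L_uniformly_bounded : exists2 C : R, 0 < C &
  forall psi, increasing psi -> forall f, q (L psi f) <= C * q f.
Proof.
have [r [s [j jP]]] : exists r s j, forall psi, increasing psi -> forall t,
    q (L (addn^~ s) (L psi (lcomb x t))) <= j%:R * q (L (addn^~ r) (lcomb x t)).
  apply: (@shift_uniformity (fun j a b => b <= j%:R * a)) => psi /L_bounded[C C0 CP].
  exists (Num.bound C) => t; apply: le_trans (CP _) _; rewrite ler_wpM2r //.
  by apply/ltW/archi_boundP/ltW.
have [Cr Cr0 CrP] := L_bounded (increasing_addr r).
have [cs cs0 csP] := L_bounded_below (increasing_addr s).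
have C0 : 0 <= j%:R * Cr / cs by rewrite divr_ge0 ?mulr_ge0 // ltW.
exists (j%:R * Cr / cs + 1) => [|psi psi_inc]; first by rewrite ltr_wpDl.
apply: bounded_from_span; [exact: L_linear | exact: L_bounded | exact: addr_ge0 |] => t.
apply: (@le_trans _ _ (j%:R * Cr / cs * q (lcomb x t))); last first.
  by rewrite ler_wpM2r // lerDl.
rewrite mulrAC ler_pdivlMr // [_ * cs]mulrC -mulrA.
apply: le_trans (csP _) _; apply: le_trans (jP _ psi_inc t) _.
by rewrite ler_wpM2l.
Qed.

Lemma L_uniformly_bounded_below : exists2 c : R, 0 < c &
  forall psi, increasing psi -> forall f, c * q f <= q (L psi f).
Proof.
have [r [s [j jP]]] : exists r s j, forall psi, increasing psi -> forall t,
    q (L (addn^~ r) (lcomb x t)) <= j%:R * q (L (addn^~ s) (L psi (lcomb x t))).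
  apply: (@shift_uniformity (fun j a b => a <= j%:R * b)) => psi /L_bounded_below[c c0 cP].
  exists (Num.bound c^-1) => t; have := cP (lcomb x t).
  rewrite -ler_pdivlMl // => /le_trans; apply; rewrite ler_wpM2r //.
  by apply/ltW/archi_boundP; rewrite invr_ge0 ltW.
have [cr cr0 crP] := L_bounded_below (increasing_addr r).
have [Cs Cs0 CsP] := L_bounded (increasing_addr s).
have D0 : 0 < j%:R * Cs + 1 by rewrite ltr_wpDl ?mulr_ge0 // ltW.
exists (cr / (j%:R * Cs + 1)) => [|psi psi_inc]; first by rewrite divr_gt0.
apply: bounded_below_from_span; [exact: L_linear | exact: L_bounded | exact: divr_gt0 |] => t.
rewrite mulrAC ler_pdivrMr //; apply: le_trans (crP _) _; apply: le_trans (jP _ psi_inc t) _.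
apply: le_trans (ler_wpM2l (ler0n _ j) (CsP _)) _.
by rewrite mulrA mulrDr mulr1 mulrC lerDl.
Qed.

Definition increasing_maps : set (nat -> nat) := [set psi : nat -> nat | increasing psi].

Definition sup_shifts h := sup [set q (L rho h) | rho in increasing_maps].

Lemma sup_shifts_ub h rho : increasing rho -> q (L rho h) <= sup_shifts h.
Proof.
move=> rho_inc; apply: ub_le_sup; last by exists rho.
have [C _ CP] := L_uniformly_bounded.
by exists (C * q h) => _ [tau tau_inc <-]; exact: CP.
Qed.

Lemma sup_shifts_le h b : (forall rho, increasing rho -> q (L rho h) <= b) -> sup_shifts h <= b.
Proof.
move=> bP; apply: ge_sup => [|_ [rho rho_inc <-]]; last exact: bP.
by exists (q (L id h)), id.
Qed.

Lemma q_le_sup_shifts h : q h <= sup_shifts h.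
Proof. by rewrite -{1}(L_id h); exact: sup_shifts_ub. Qed.

Lemma sup_shifts_ge0 h : 0 <= sup_shifts h.
Proof. exact: le_trans (q_ge0 h) (q_le_sup_shifts h). Qed.

Lemma sup_shifts_D f g : sup_shifts (f + g) <= sup_shifts f + sup_shifts g.
Proof.
apply: sup_shifts_le => rho rho_inc; rewrite (linear_mapD (L_linear rho_inc)).
by apply: le_trans (qD _ _) _; apply: lerD; exact: sup_shifts_ub.
Qed.

Lemma sup_shifts_L tau h : increasing tau -> sup_shifts (L tau h) <= sup_shifts h.
Proof.
move=> tau_inc; apply: sup_shifts_le => rho rho_inc.
by rewrite (L_comp rho_inc tau_inc h); apply/sup_shifts_ub/increasing_comp.
Qed.

Variable w : K -> R.
Hypothesis w_ge0 : forall a, 0 <= w a.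
Hypothesis qZ : forall a f, q (a *: f) = w a * q f.

Lemma sup_shifts_Z a h : sup_shifts (a *: h) = w a * sup_shifts h.
Proof.
apply/le_anti/andP; split.
  apply: sup_shifts_le => rho rho_inc; rewrite (linear_mapZ (L_linear rho_inc)) qZ.
  by rewrite ler_wpM2l // sup_shifts_ub.
have [->|wa_neq0] := eqVneq (w a) 0; first by rewrite mul0r sup_shifts_ge0.
have wa_gt0 : 0 < w a by rewrite lt0r wa_neq0 w_ge0.
rewrite mulrC -ler_pdivlMr //; apply: sup_shifts_le => rho rho_inc.
by rewrite ler_pdivlMr // mulrC -qZ -(linear_mapZ (L_linear rho_inc)) sup_shifts_ub.
Qed.

Definition spread_norm h := inf [set sup_shifts (L tau h) | tau in increasing_maps].

Lemma spread_norm_le h tau : increasing tau -> spread_norm h <= sup_shifts (L tau h).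
Proof.
move=> tau_inc; apply: ge_inf; last by exists tau.
by exists 0 => _ [rho _ <-]; exact: sup_shifts_ge0.
Qed.

Lemma spread_norm_ge h b : (forall tau, increasing tau -> b <= sup_shifts (L tau h)) ->
  b <= spread_norm h.
Proof.
move=> bP; apply: lb_le_inf => [|_ [tau tau_inc <-]]; last exact: bP.
by exists (sup_shifts (L id h)), id.
Qed.

Lemma spread_norm_ge0 h : 0 <= spread_norm h.
Proof. by apply: spread_norm_ge => tau _; exact: sup_shifts_ge0. Qed.

Lemma spread_norm_equiv : equiv_qn q spread_norm.
Proof.
have [c c0 cP] := L_uniformly_bounded_below; have [C C0 CP] := L_uniformly_bounded.
exists c, C; split=> // h; apply/andP; split.
  by apply: spread_norm_ge => tau tau_inc; apply: le_trans (cP _ tau_inc h) (q_le_sup_shifts _).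
apply: le_trans (spread_norm_le h increasing_id) _.
by rewrite L_id; apply: sup_shifts_le => rho rho_inc; exact: CP.
Qed.

Lemma spread_norm_eq0 h : spread_norm h = 0 -> h = 0.
Proof.
move=> h0; have [c [C [c0 _ cP]]] := spread_norm_equiv.
apply/q_eq0/le_anti; rewrite q_ge0 andbT.
by have /andP[+ _] := cP h; rewrite h0 pmulr_rle0.
Qed.

Lemma spread_norm_D f g : spread_norm (f + g) <= spread_norm f + spread_norm g.
Proof.
have le_sum tau1 tau2 : increasing tau1 -> increasing tau2 ->
    spread_norm (f + g) <= sup_shifts (L tau1 f) + sup_shifts (L tau2 g).
  move=> tau1_inc tau2_inc; have [a [b [a_inc b_inc ab]]] := common_refinement tau1_inc tau2_inc.
  have at1_inc := increasing_comp a_inc tau1_inc.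
  apply: le_trans (spread_norm_le _ at1_inc) _.
  rewrite (linear_mapD (L_linear at1_inc)); apply: le_trans (sup_shifts_D _ _) _.
  rewrite -(L_comp a_inc tau1_inc) (funext ab) -(L_comp b_inc tau2_inc).
  by apply: lerD; exact: sup_shifts_L.
rewrite -lerBlDl; apply: spread_norm_ge => tau2 tau2_inc.
rewrite lerBlDl -lerBlDr; apply: spread_norm_ge => tau1 tau1_inc.
by rewrite lerBlDr; exact: le_sum.
Qed.

Lemma spread_norm_Z a h : spread_norm (a *: h) = w a * spread_norm h.
Proof.
have shiftZ tau : increasing tau -> sup_shifts (L tau (a *: h)) = w a * sup_shifts (L tau h).
  by move=> tau_inc; rewrite (linear_mapZ (L_linear tau_inc)) sup_shifts_Z.
apply/le_anti/andP; split; last first.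
  apply: spread_norm_ge => tau tau_inc; rewrite shiftZ //.
  by rewrite ler_wpM2l // spread_norm_le.
have [wa0|wa_neq0] := eqVneq (w a) 0.
  by apply: le_trans (spread_norm_le _ increasing_id) _; rewrite shiftZ ?wa0 ?mul0r.
have wa_gt0 : 0 < w a by rewrite lt0r wa_neq0 w_ge0.
rewrite mulrC -ler_pdivrMr //; apply: spread_norm_ge => tau tau_inc.
by rewrite ler_pdivrMr // mulrC -shiftZ // spread_norm_le.
Qed.

Lemma spread_norm_L sigma h : increasing sigma -> spread_norm (L sigma h) = spread_norm h.
Proof.
move=> sigma_inc; apply/le_anti/andP; split; last first.
  apply: spread_norm_ge => tau tau_inc; rewrite L_comp //.
  exact/spread_norm_le/increasing_comp.
apply: spread_norm_ge => tau tau_inc.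
have [a [b [a_inc b_inc ab]]] := common_refinement sigma_inc tau_inc.
apply: le_trans (spread_norm_le _ a_inc) _.
by rewrite L_comp // (funext ab) -L_comp //; exact: sup_shifts_L.
Qed.

Lemma L_inverse_on_span s (M : set nat) : increasing s -> M `<=` range s ->
  exists Li : X -> X, (forall f, in_closed_span q x M f -> L s (Li f) = f) /\
                      (forall h, Li (L s h) = h).
Proof.
move=> s_inc M_range.
have /choice[Li LiP] : forall f, exists h, (exists h', L s h' = f) -> L s h = f.
  move=> f; have [[h <-]|no_pre] := pselect (exists h, L s h = f); first by exists h.
  by exists 0 => /no_pre.
exists Li; split=> [f /(closed_span_in_range s_inc M_range) /LiP //|h].
by apply: (L_inj s_inc); apply: LiP; exists h.
Qed.

Lemma spread_norm_translation (M : set nat) psi : infinite_set M ->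
  (forall m n, M m -> M n -> (m < n)%N -> (psi m < psi n)%N) ->
  translation_norm_le1 spread_norm x M psi.
Proof.
move=> M_inf psi_inc_M; have [s [s_inc Ms M_range]] := infinite_set_enum M_inf.
have ps_inc : increasing (psi \o s) by move=> m n /s_inc; apply: psi_inc_M.
have /choice[sinv sinvP] : forall n, exists m, M n -> s m = n.
  by move=> n; have [/M_range[m _ <-]|nM] := pselect (M n); [exists m | exists 0%N].
have [Li [LiK LLi]] := L_inverse_on_span s_inc M_range.
have isom f : in_closed_span q x M f -> spread_norm (L (psi \o s) (Li f)) = spread_norm f.
  by move=> /LiK Lf; rewrite spread_norm_L // -{2}Lf spread_norm_L.
rewrite /translation_norm_le1 -!(in_closed_span_equiv _ _ spread_norm_equiv).
exists (L (psi \o s) \o Li); split=> [a f g /LiK Lf /LiK Lg /=|s' a s'M /=| | |].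
- rewrite -(L_linear ps_inc); congr (L _ _).
  by rewrite -{1}Lf -{1}Lg -(L_linear s_inc) LLi.
- set t := [seq (n, a n) | n <- s']; rewrite !lin_combE -/t.
  have tM : {in t, forall u, M u.1} by move=> _ /mapP[n ns ->]; exact: s'M.
  have Lt : L s (lcomb x (relabel sinv t)) = lcomb x t.
    by rewrite L_lcomb // -lcomb_comp; apply: eq_lcomb => u /tM Mu /=; rewrite sinvP.
  rewrite -Lt LLi L_lcomb // -lcomb_comp; apply: eq_lcomb => u /tM Mu /=.
  by rewrite sinvP.
- split=> [f _ | g].
    by apply: L_in_closed_span => // m; exists (s m).
  have psiM_range : psi @` M `<=` range (psi \o s).
    by move=> _ [n /M_range[m _ <-] <-]; exists m.
  move=> /(closed_span_in_range ps_inc psiM_range) [h <-].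
  by exists (L s h); [exact: L_in_closed_span | rewrite /= LLi].
- by exists 1 => // f /isom /= ->; rewrite mul1r.
- by move=> f /isom /= ->.
Qed.

Lemma exists_spreading_invariant_norm : exists Ps : X -> R,
  [/\ (forall h, 0 <= Ps h) /\ (forall h, Ps h = 0 -> h = 0),
      forall f g, Ps (f + g) <= Ps f + Ps g,
      forall a h, Ps (a *: h) = w a * Ps h,
      equiv_qn q Ps &
      isometrically_spreading Ps x].
Proof.
exists spread_norm; split; [split | | | |].
- exact: spread_norm_ge0.
- exact: spread_norm_eq0.
- exact: spread_norm_D.
- exact: spread_norm_Z.
- exact: spread_norm_equiv.
- by move=> M psi; exact: spread_norm_translation.
Qed.

End ShiftOperators.
End SubadditiveFunctional.

Section Renorming.
Variables (R : realType) (K : numFieldType) (absK : K -> R) (X : lmodType K).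
Implicit Types (F G H N P : X -> R) (A : X -> X).

Lemma equiv_qn_trans F G H : equiv_qn F G -> equiv_qn G H -> equiv_qn F H.
Proof.
move=> [c [C [c0 C0 FG]]] [d [D [d0 D0 GH]]].
exists (d * c), (D * C); split; rewrite ?mulr_gt0 // => f.
have /andP[cFG GCF] := FG f; have /andP[dGH HDG] := GH f.
rewrite -!mulrA; apply/andP; split.
  by apply: le_trans dGH; rewrite ler_pM2l.
by apply: le_trans HDG _; rewrite ler_pM2l.
Qed.

Lemma equiv_qn_powR F G (r : R) : 0 < r -> (forall f, 0 <= F f) ->
  equiv_qn F G -> equiv_qn (fun f => F f `^ r) (fun f => G f `^ r).
Proof.
move=> r0 F0 [c [C [c0 C0 FG]]]; exists (c `^ r), (C `^ r); split; rewrite ?powR_gt0 // => f.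
have /andP[cFG GCF] := FG f; have G0 : 0 <= G f := le_trans (mulr_ge0 (ltW c0) (F0 f)) cFG.
rewrite -!powRM ?(ltW c0) ?(ltW C0) //; apply/andP; split; apply: ler_powR2r;
  by rewrite ?mulr_ge0 ?(ltW r0) ?(ltW c0) ?(ltW C0).
Qed.

Lemma bounded_wrt_equiv N P A : (forall f, 0 <= N f) -> equiv_qn N P ->
  (exists C : R, forall f, N (A f) <= C * N f) -> bounded_wrt P A.
Proof.
move=> N0 [c [C [c0 C0 NP]]] [D AD].
exists (C * (`|D| + 1) / c) => [|f]; first by rewrite !mulr_gt0 ?invr_gt0 ?ltr_wpDl.
have /andP[_ PCN] := NP (A f); have /andP[cNP _] := NP f.
have NfP : N f <= c^-1 * P f by rewrite ler_pdivlMl.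
have ADf : N (A f) <= (`|D| + 1) * N f.
  by apply: le_trans (AD f) _; rewrite ler_wpM2r // (le_trans (ler_norm D)) ?lerDl.
have -> : C * (`|D| + 1) / c * P f = C * ((`|D| + 1) * (c^-1 * P f)) by rewrite !mulrA.
apply: le_trans PCN _; rewrite ler_pM2l //; apply: le_trans ADf _.
by rewrite ler_wpM2l ?addr_ge0.
Qed.

Lemma bounded_below_wrt_equiv N P A : equiv_qn N P ->
  bounded_below_wrt N A -> bounded_below_wrt P A.
Proof.
move=> [c [C [c0 C0 NP]]] [d d0 dA].
exists (c * d / C) => [|f]; first by rewrite !mulr_gt0 ?invr_gt0.
have /andP[cNP _] := NP (A f); have /andP[_ PCN] := NP f.
have -> : c * d / C * P f = c * (d * (C^-1 * P f)) by rewrite !mulrA.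
apply: le_trans cNP; rewrite ler_pM2l //; apply: le_trans (dA f).
by rewrite ler_pM2l // ler_pdivrMl.
Qed.

Lemma bounded_wrt_powR (r : R) P A : 0 < r -> (forall f, 0 <= P f) ->
  bounded_wrt P A -> bounded_wrt (fun f => P f `^ r) A.
Proof.
move=> r0 P0 [C C0 AC]; exists (C `^ r) => [|f]; first exact: powR_gt0.
by rewrite -powRM ?(ltW C0) // ler_powR2r ?mulr_ge0 ?(ltW r0) ?(ltW C0).
Qed.

Lemma bounded_below_wrt_powR (r : R) P A : 0 < r -> (forall f, 0 <= P f) ->
  bounded_below_wrt P A -> bounded_below_wrt (fun f => P f `^ r) A.
Proof.
move=> r0 P0 [c c0 Ac]; exists (c `^ r) => [|f]; first exact: powR_gt0.
by rewrite -powRM ?(ltW c0) // ler_powR2r ?mulr_ge0 ?(ltW r0) ?(ltW c0).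
Qed.

Lemma pnorm_root (p : R) (Ps : X -> R) : (forall a, 0 <= absK a) -> 0 < p ->
  (forall h, 0 <= Ps h) -> (forall h, Ps h = 0 -> h = 0) ->
  (forall f g, Ps (f + g) <= Ps f + Ps g) ->
  (forall a h, Ps (a *: h) = absK a `^ p * Ps h) ->
  pnorm absK p (fun h => Ps h `^ p^-1).
Proof.
move=> absK_ge0 p_gt0 Ps0 Ps_eq0 PsD PsZ; have p_neq0 := lt0r_neq0 p_gt0.
have pV_ge0 : 0 <= p^-1 by rewrite invr_ge0 ltW.
split=> [|f g]; last by rewrite !powRVK ?powR_ge0.
split=> [h|h /powR_eq0_eq0/Ps_eq0 //|a h|]; first exact: powR_ge0.
  by rewrite PsZ powRM ?powR_ge0 // powRK.
exists (2 `^ p^-1) => [|f g].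
  have le12 : (1 : R) <= 2 by lra.
  by have := ler_powR2r pV_ge0 ler01 (ler0n R 2) le12; rewrite powR1.
wlog le_fg : f g / Ps f <= Ps g => [sym|].
  by have [/sym|/ltW/sym] := leP (Ps f) (Ps g); rewrite // addrC [_ + Ps g `^ _]addrC.
apply: le_trans (ler_powR2r pV_ge0 (Ps0 _) (addr_ge0 (Ps0 _) (Ps0 _)) (PsD f g)) _.
apply: le_trans (ler_powR2r pV_ge0 (addr_ge0 (Ps0 _) (Ps0 _)) _ (_ : _ <= 2 * Ps g)) _.
- by rewrite mulr_ge0.
- by rewrite mulr2n mulrDl mul1r lerD2r.
by rewrite powRM // ler_wpM2l ?powR_ge0 // lerDr powR_ge0.
Qed.

Lemma isometrically_spreading_powR F (r : R) (x : nat -> X) : 0 < r -> (forall f, 0 <= F f) ->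
  isometrically_spreading F x -> isometrically_spreading (fun f => F f `^ r) x.
Proof.
move=> r0 F0 F_iso M psi M_inf psi_inc.
have [T [T_lin T_lcomb T_onto [c c0 cT] T1]] := F_iso M psi M_inf psi_inc.
rewrite /translation_norm_le1.
rewrite !(in_closed_span_dominated0E _ _ (dominated0_powR r0 F0) (dominated0_powRV r0 F0)).
exists T; split=> //.
  exists (c `^ r) => [|f f_in]; first exact: powR_gt0.
  by rewrite -powRM ?(ltW c0) // ler_powR2r ?mulr_ge0 ?(ltW r0) ?(ltW c0) ?cT.
by move=> f f_in; rewrite ler_powR2r ?(ltW r0) ?T1.
Qed.

Lemma spreading_basis_shifts N P (x : nat -> X) : (forall f, 0 <= N f) ->
  equiv_qn N P -> spreading_basis absK N x ->
  exists L : (nat -> nat) -> X -> X,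
    [/\ forall psi, increasing psi -> linear_map (L psi),
        forall psi, increasing psi -> forall n, L psi (x n) = x (psi n),
        forall psi, increasing psi -> bounded_wrt P (L psi) &
        forall psi, increasing psi -> bounded_below_wrt P (L psi)].
Proof.
move=> N0 NP [xs [[_ _ xs_x] shifts]].
have /choice[L LP] : forall psi, exists L : X -> X,
    increasing psi -> is_shift_op N x xs psi L /\ bounded_below_wrt N L.
  move=> psi; have [/shifts[L LP]|not_inc] := pselect (increasing psi); first by exists L.
  by exists id => /not_inc.
exists L; split=> psi /LP[[[L_lin L_bnd] L_span] L_below] //.
- move=> n; have := L_span [:: n] (fun=> 1) isT.
  by rewrite /lin_comb !big_seq1 scale1r xs_x eqxx scale1r.
- exact: bounded_wrt_equiv N0 NP L_bnd.
- exact: bounded_below_wrt_equiv NP L_below.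
Qed.

End Renorming.

Lemma spreading_basis_isometric_renorming (R : realType) (K : numFieldType) (absK : K -> R)
    (X : lmodType K) (p : R) (N : X -> R) (x : nat -> X) :
  (forall a, 0 <= absK a) -> absK (-1) = 1 -> absK 0 = 0 -> 0 < p ->
  quasi_banach absK N -> locally_pconvex absK p N -> spreading_basis absK N x ->
  exists N' : X -> R, [/\ pnorm absK p N', equiv_qn N N' & isometrically_spreading N' x].
Proof.
move=> absK_ge0 absKN1 absK0 p_gt0 [[N_ge0 _ _ _] N_complete] [P [[[P_ge0 P_eq0 PZ _] PD] NP]].
move=> x_spreading; have [_ [[x_dense _ _] _]] := x_spreading.
have [L [L_linear L_x L_bounded L_bounded_below]] := spreading_basis_shifts N_ge0 NP x_spreading.
pose q f := P f `^ p.
have P0 : P 0 = 0 by have := PZ 0 0; rewrite scale0r absK0 mul0r.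
have q_eq0 f : q f = 0 -> f = 0 by move/powR_eq0_eq0/P_eq0.
have q0 : q 0 = 0 by rewrite /q P0 powR0 ?lt0r_neq0.
have qN f : q (- f) = q f by rewrite /q -scaleN1r PZ absKN1 mul1r.
have qZ a f : q (a *: f) = absK a `^ p * q f by rewrite /q PZ powRM.
have qL_bounded psi : increasing psi -> bounded_wrt q (L psi).
  by move/L_bounded/(bounded_wrt_powR p_gt0 P_ge0).
have qL_bounded_below psi : increasing psi -> bounded_below_wrt q (L psi).
  by move/L_bounded_below/(bounded_below_wrt_powR p_gt0 P_ge0).
have [NP_dom PN_dom] := equiv_qn_dominated0 NP.
have qN_dom : dominated0 q N := dominated0_trans (dominated0_powR p_gt0 P_ge0) PN_dom.
have Nq_dom : dominated0 N q := dominated0_trans NP_dom (dominated0_powRV p_gt0 P_ge0).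
have [Ps [[Ps_ge0 Ps_eq0] PsD PsZ qPs Ps_iso]] := exists_spreading_invariant_norm
  (fun f => powR_ge0 _ _) q_eq0 q0 qN PD
  (fun f => in_closed_span_dominated0 qN_dom (x_dense f))
  (complete_wrt_dominated0 qN_dom Nq_dom N_complete)
  L_linear L_x qL_bounded qL_bounded_below (fun a => powR_ge0 _ _) qZ.
exists (fun f => Ps f `^ p^-1); split.
- exact: pnorm_root.
- apply: equiv_qn_trans NP _.
  have qV : (fun f => q f `^ p^-1) = P by apply/funext => f; rewrite /q powRK ?lt0r_neq0.
  by rewrite -qV; apply: (equiv_qn_powR _ (fun f => powR_ge0 _ _) qPs); rewrite invr_gt0.
- by apply: isometrically_spreading_powR; rewrite ?invr_gt0.
Qed.

Local Close Scope classical_set_scope.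

Theorem theorem2p8 (R : realType) :
  (forall (X : lmodType R) (p : R) (N : X -> R) (x : nat -> X),
      0 < p <= 1 ->
      quasi_banach (fun a : R => `|a|) N ->
      locally_pconvex (fun a : R => `|a|) p N ->
      spreading_basis (fun a : R => `|a|) N x ->
      exists N' : X -> R, [/\ pnorm (fun a : R => `|a|) p N', equiv_qn N N'
                            & isometrically_spreading N' x])
  /\
  (forall (X : lmodType R[i]) (p : R) (N : X -> R) (x : nat -> X),
      0 < p <= 1 ->
      quasi_banach (fun a : R[i] => complex.Re `|a|) N ->
      locally_pconvex (fun a : R[i] => complex.Re `|a|) p N ->
      spreading_basis (fun a : R[i] => complex.Re `|a|) N x ->
      exists N' : X -> R,
        [/\ pnorm (fun a : R[i] => complex.Re `|a|) p N', equiv_qn N N'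
          & isometrically_spreading N' x]).
Proof.
split=> X p N x /andP[p_gt0 _].
  apply: spreading_basis_isometric_renorming p_gt0.
  - by move=> a; exact: normr_ge0.
  - by rewrite normrN normr1.
  - exact: normr0.
apply: spreading_basis_isometric_renorming p_gt0.
- by move=> a; rewrite normc_def /= sqrtr_ge0.
- by rewrite normrN normr1.
- by rewrite normr0.
Qed.
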